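(* Let $k$ be a field, $n\geq1$, $R=k[x_1,\dots,x_n,y_1,\dots,y_n]/(\sum_i x_iy_i-1)$, $x=(x_1,\dots,x_n)$, $y=(y_1,\dots,y_n)$. Then in $\widetilde{K}_1(Q_{2n-1})$ one has $[\alpha_n(x,y)^t]=(-1)^{n+1}[\alpha_n(x,y)]$.
   Context: $Q_{2n-1}=\operatorname{Spec}R$. The Suslin matrix $\alpha_n(a,b)\in M_{2^{n-1}}(R)$ for $a=(a_1,\dots,a_n),b=(b_1,\dots,b_n)\in R^n$ is defined by $\alpha_1(a,b)=a_1$ and for $n\ge2$, $\alpha_n(a,b)=\begin{pmatrix}a_1\mathrm{Id}_{2^{n-2}}&\alpha_{n-1}(a',b')\\-\alpha_{n-1}(b',a')^t&b_1\mathrm{Id}_{2^{n-2}}\end{pmatrix}$ with $a'=(a_2,\dots,a_n)$, $b'=(b_2,\dots,b_n)$; when $a\cdot b^t=1$ it is invertible. $\widetilde{K}_1(Q_{2n-1})$ is the cokernel of $K_1(k)\to K_1(R)$ induced by the structure map, and $[M]$ is the class of $M\in GL_{2^{n-1}}(R)$. *)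

From HB Require Import structures.
From mathcomp Require Import all_boot all_order all_algebra.
From mathcomp Require Import generic_quotient ring_quotient.
From mathcomp Require Import mpoly.
From Stdlib Require Import ClassicalEpsilon.

Set Implicit Arguments.
Unset Strict Implicit.
Unset Printing Implicit Defensive.

Import GRing.Theory.
Local Open Scope ring_scope.
Local Open Scope quotient_scope.

(* The Suslin matrix alpha_{m+1}(a,b) in M_{2^m}(R), where the vectors     *)
(* a = (a_1,...,a_{m+1}), b = (b_1,...,b_{m+1}) are given as functions     *)
(* nat -> R with a_1 = a 0, a_2 = a 1, ... (only indices 0..m are used).   *)

Lemma pow2S (m : nat) : (2 ^ m + 2 ^ m = 2 ^ m.+1)%N.
Proof. by rewrite addnn -mul2n expnS. Qed.

Fixpoint suslin (R : pzRingType) (m : nat) (a b : nat -> R) : 'M[R]_(2 ^ m) :=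
  match m return 'M[R]_(2 ^ m) with
  | 0 => (a 0%N)%:M
  | m'.+1 =>
      castmx (pow2S m', pow2S m')
        (block_mx ((a 0%N)%:M) (suslin m' (fun i => a i.+1) (fun i => b i.+1))
                  (- (suslin m' (fun i => b i.+1) (fun i => a i.+1))^T)
                  ((b 0%N)%:M))
  end.

Inductive elem_mx (R : pzRingType) (N : nat) : 'M[R]_N -> Prop :=
| elem_mx1 : elem_mx 1%:M
| elem_mxM (E : 'M[R]_N) (i j : 'I_N) (r : R) :
    i != j -> elem_mx E -> elem_mx (E *m (1%:M + r *: delta_mx i j)).

Definition invertible_mx (R : pzRingType) (m : nat) (A : 'M[R]_m) : Prop :=
  exists B : 'M[R]_m, A *m B = 1%:M /\ B *m A = 1%:M.

(* [A] = [B] in  K~_1 = coker(K_1(k) -> K_1(R)) = GL(R)/(E(R).GL(k)),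
   where iota : k -> R is the structure map: after stabilisation,
   A (+) 1 = (B (+) 1) * E * iota(C) with E elementary and C in GL(k). *)
Definition rK1_eq (k : fieldType) (R : pzRingType) (iota : k -> R) (m : nat)
    (A B : 'M[R]_m) : Prop :=
  invertible_mx A /\ invertible_mx B /\
  exists (p : nat) (E : 'M[R]_(m + p)) (C : 'M[k]_(m + p)),
    elem_mx E /\ C \in unitmx /\
    block_mx A 0 0 (1%:M : 'M[R]_p) =
      block_mx B 0 0 (1%:M : 'M[R]_p) *m E *m map_mx iota C.

Definition Xv (k : fieldType) (N : nat) (i : 'I_N) : {mpoly k[N + N]} :=
  'X_(lshift N i).
Definition Yv (k : fieldType) (N : nat) (i : 'I_N) : {mpoly k[N + N]} :=
  'X_(rshift N i).

Definition qrel (k : fieldType) (N : nat) : {mpoly k[N + N]} :=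
  \sum_(i < N) @Xv k N i * @Yv k N i - 1.

Definition qideal (k : fieldType) (n : nat) : pred {mpoly k[n.+1 + n.+1]} :=
  fun p => if excluded_middle_informative (exists q, p = q * @qrel k n.+1)
           then true else false.

Lemma qidealP (k : fieldType) (n : nat) p :
  reflect (exists q, p = q * @qrel k n.+1) (p \in @qideal k n).
Proof.
rewrite /in_mem /= /qideal.
by case: excluded_middle_informative => H; constructor.
Qed.

Lemma qideal_closed (k : fieldType) (n : nat) : idealr_closed (@qideal k n).
Proof.
split.
- by apply/qidealP; exists 0; rewrite mul0r.
- apply/qidealP => -[q Hq].
  pose v := fun j : 'I_(n.+1 + n.+1) => if (val j == 0%N) || (val j == n.+1)
                                        then (1 : k) else 0.
  have := congr1 (meval v) Hq.
  rewrite meval1 mevalM /qrel mevalB meval1 (bigD1 ord0) //= mevalD mevalM.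
  rewrite /Xv /Yv !mevalXU /v /= addn0 eqxx mul1r.
  rewrite (big_morph (meval v) (@mevalD _ _ v) (meval0 v)) big1 ?addr0 ?subrr.
    by rewrite mulr0 => /eqP; rewrite oner_eq0.
  move=> i Hi; rewrite mevalM !mevalXU /v /=.
  have H0 : (i == 0%N :> nat) = false.
    by apply/negbTE; move: Hi; apply: contra => /eqP Hi; apply/eqP/val_inj.
  have H1 : (n.+1 + i == n.+1)%N = false.
    by rewrite -[X in (_ == X)%N]addn0 eqn_add2l H0.
  by rewrite H1 mulr0.
- move=> a u w /qidealP [q1 ->] /qidealP [q2 ->].
  by apply/qidealP; exists (a * q1 + q2); rewrite mulrDl mulrA.
Qed.

Definition qidealI (k : fieldType) (n : nat) : idealr {mpoly k[n.+1 + n.+1]} :=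
  HB.pack (@qideal k n)
    (GRing.isZmodClosed.Build _ (@qideal k n)
       (idealr_closedB (@qideal_closed k n)))
    (isProperIdeal.Build _ (@qideal k n)
       (idealr_closed_nontrivial (@qideal_closed k n))).

Definition Rq (k : fieldType) (n : nat) := {ideal_quot (qidealI k n)}.

Definition Rq_pi (k : fieldType) (n : nat) (p : {mpoly k[n.+1 + n.+1]}) :
  Rq k n := \pi_(Rq k n) p.

Definition Rq_iota (k : fieldType) (n : nat) (c : k) : Rq k n := @Rq_pi k n c%:MP.

Definition xq (k : fieldType) (n : nat) (i : nat) : Rq k n :=
  @Rq_pi k n (@Xv k n.+1 (inord i : 'I_n.+1)).
Definition yq (k : fieldType) (n : nat) (i : nat) : Rq k n :=
  @Rq_pi k n (@Yv k n.+1 (inord i : 'I_n.+1)).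

From HB Require Import structures.
From mathcomp Require Import all_boot all_order all_algebra.
From mathcomp Require Import generic_quotient ring_quotient mpoly.

Set Implicit Arguments.
Unset Strict Implicit.
Unset Printing Implicit Defensive.

Import GRing.Theory.
Local Open Scope ring_scope.

(* Write alpha = alpha_n(x,y) and alpha' = alpha_n(y,x)^T, so that
   alpha alpha' = (sum_i x_i y_i)%:M = 1.  Splitting Suslin matrices into their
   four blocks, an induction on n produces orthogonal (signed permutation)
   matrices L, R' over k with alpha_n(a,b)^T = L alpha_n(a,b) R' for n even and
   alpha_n(b,a) = L alpha_n(a,b) R' for n odd, uniformly in a and b.  Hence
     alpha^T       = alpha [alpha', L] (L R')               for n even,
     alpha^T alpha = R' [alpha', L] R'^T (R' L)             for n odd,
   with [U, V] = U V U^-1 V^-1.  By Whitehead's lemma commutators, and their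
   conjugates, are elementary after stabilisation, while matrices coming from
   k vanish in the reduced K_1. *)

Section Cast.
Variable R : pzRingType.

Lemma castmx_mul m m' (e : m = m') (A B : 'M[R]_m) :
  castmx (e, e) (A *m B) = castmx (e, e) A *m castmx (e, e) B.
Proof. by case: m' / e; rewrite !castmx_id. Qed.

Lemma castmx_scalar m m' (e : m = m') (a : R) :
  castmx (e, e) (a%:M : 'M[R]_m) = a%:M.
Proof. by case: m' / e; rewrite castmx_id. Qed.

End Cast.

Section Orthogonal.
Variable R : comNzRingType.

Definition orthogonal_mx m (A : 'M[R]_m) := A *m A^T = 1%:M /\ A^T *m A = 1%:M.

Lemma orthogonal_mx1 m : orthogonal_mx (1%:M : 'M[R]_m).
Proof. by rewrite /orthogonal_mx tr_scalar_mx mulmx1. Qed.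

Lemma orthogonal_tr m (A : 'M[R]_m) : orthogonal_mx A -> orthogonal_mx A^T.
Proof. by rewrite /orthogonal_mx trmxK => -[A1 A2]. Qed.

Lemma orthogonal_opp m (A : 'M[R]_m) : orthogonal_mx A -> orthogonal_mx (- A).
Proof. by rewrite /orthogonal_mx (linearN (@trmx R m m)) !mulNmx !mulmxN !opprK. Qed.

Lemma orthogonal_castmx m m' (e : m = m') (A : 'M[R]_m) :
  orthogonal_mx A -> orthogonal_mx (castmx (e, e) A).
Proof. by case: m' / e; rewrite castmx_id. Qed.

Lemma orthogonal_block_diag m1 m2 (A : 'M[R]_m1) (B : 'M[R]_m2) :
  orthogonal_mx A -> orthogonal_mx B -> orthogonal_mx (block_mx A 0 0 B).
Proof.
move=> [A1 A2] [B1 B2]; rewrite /orthogonal_mx tr_block_mx !mulmx_block !trmx0.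
by rewrite !(mulmx0, mul0mx, addr0, add0r) A1 A2 B1 B2 -!scalar_mx_block.
Qed.

Lemma orthogonal_block_antidiag m (A B : 'M[R]_m) :
  orthogonal_mx A -> orthogonal_mx B -> orthogonal_mx (block_mx 0 A B 0).
Proof.
move=> [A1 A2] [B1 B2]; rewrite /orthogonal_mx tr_block_mx !mulmx_block !trmx0.
by rewrite !(mulmx0, mul0mx, addr0, add0r) A1 A2 B1 B2 -!scalar_mx_block.
Qed.

End Orthogonal.

Lemma orthogonal_map (R S : comNzRingType) (f : {rmorphism R -> S}) m (A : 'M[R]_m) :
  orthogonal_mx A -> orthogonal_mx (map_mx f A).
Proof. by move=> [A1 A2]; rewrite /orthogonal_mx map_trmx -!map_mxM A1 A2 map_mx1. Qed.

Lemma orthogonal_unitmx (R : comUnitRingType) m (A : 'M[R]_m) :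
  orthogonal_mx A -> A \in unitmx.
Proof. by case=> /mulmx1_unit[]. Qed.

Section Suslin.
Variable R : comNzRingType.
Implicit Types a b : nat -> R.

Lemma suslinS m a b : suslin m.+1 a b =
  castmx (pow2S m, pow2S m)
    (block_mx ((a 0%N)%:M) (suslin m (a \o succn) (b \o succn))
              (- (suslin m (b \o succn) (a \o succn))^T) ((b 0%N)%:M)).
Proof. by []. Qed.

Lemma suslin_mulmx_tr m a b :
  suslin m a b *m (suslin m b a)^T = (\sum_(i < m.+1) a i * b i)%:M /\
  (suslin m b a)^T *m suslin m a b = (\sum_(i < m.+1) a i * b i)%:M.
Proof.
elim: m a b => [|m IH] a b; first by rewrite /= tr_scalar_mx big_ord1 -!scalar_mxM mulrC.
have [IH1 IH2] := IH (a \o succn) (b \o succn).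
rewrite !suslinS !trmx_cast -!castmx_mul tr_block_mx !mulmx_block big_ord_recl.
rewrite -(castmx_scalar (pow2S m)) scalar_mx_block !tr_scalar_mx linearN /= !trmxK.
rewrite !mul_scalar_mx !mul_mx_scalar !mulNmx !mulmxN IH1 IH2 !opprK.
rewrite !scalerN !addNr !addrN !scale_scalar_mx -!raddfD /= (mulrC (b 0%N)).
by rewrite (addrC (\sum_(i < m.+1) _)).
Qed.

Section SuslinStep.
Variables (m : nat) (L Rr : 'M[R]_(2 ^ m)).
Hypotheses (oL : orthogonal_mx L) (oR : orthogonal_mx Rr).

Lemma suslin_tr_step :
  (forall a b, suslin m b a = L *m suslin m a b *m Rr) ->
  forall a b, (suslin m.+1 a b)^T =
    castmx (pow2S m, pow2S m) (block_mx L 0 0 (- Rr^T)) *m suslin m.+1 a b *m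
    castmx (pow2S m, pow2S m) (block_mx L^T 0 0 (- Rr)).
Proof.
case: oL oR => [L1 _] [_ R2] swap a b.
rewrite suslinS trmx_cast -!castmx_mul; congr castmx.
rewrite tr_block_mx !mulmx_block !(mulmx0, mul0mx, addr0, add0r).
rewrite !tr_scalar_mx !linearN /= !trmxK ?mul_mx_scalar ?mul_scalar_mx.
congr block_mx.
- by rewrite -scalemxAl L1 scale_scalar_mx mulr1.
- by rewrite swap.
- by rewrite swap !trmx_mul !mulNmx opprK mulmxA.
- by rewrite scalerN !mulNmx opprK -scalemxAl R2 scale_scalar_mx mulr1.
Qed.

Lemma suslin_swap_step :
  (forall a b, (suslin m a b)^T = L *m suslin m a b *m Rr) ->
  forall a b, suslin m.+1 b a =
    castmx (pow2S m, pow2S m) (block_mx 0 (- Rr^T) L 0) *m suslin m.+1 a b *m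
    castmx (pow2S m, pow2S m) (block_mx 0 L^T (- Rr) 0).
Proof.
case: oL oR => [L1 _] [_ R2] tr a b.
rewrite !suslinS -!castmx_mul; congr castmx.
rewrite !mulmx_block !(mulmx0, mul0mx, addr0, add0r) ?mul_mx_scalar ?mul_scalar_mx.
congr block_mx.
- by rewrite scalerN mulNmx mulmxN opprK -scalemxAl R2 scale_scalar_mx mulr1.
- apply: trmx_inj; rewrite !trmx_mul !linearN /= !trmxK tr.
  by rewrite !mulNmx !mulmxN opprK mulmxA.
- by rewrite mulmxN tr.
- by rewrite -scalemxAl L1 scale_scalar_mx mulr1.
Qed.

End SuslinStep.

End Suslin.

Lemma suslin_orthogonal_equiv (k R : comNzRingType) (f : {rmorphism k -> R}) n :
  exists L Rr : 'M[k]_(2 ^ n),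
  [/\ orthogonal_mx L, orthogonal_mx Rr &
    forall a b : nat -> R,
      (if ~~ odd n then (suslin n a b)^T else suslin n b a) =
      map_mx f L *m suslin n a b *m map_mx f Rr].
Proof.
elim: n => [|n [L [Rr [oL oR rel]]]].
  exists 1%:M, 1%:M; split; try exact: orthogonal_mx1.
  by move=> a b; rewrite /= tr_scalar_mx map_mx1 mul1mx mulmx1.
have oLt := orthogonal_tr oL; have oRn := orthogonal_opp oR.
have oRtn := orthogonal_opp (orthogonal_tr oR).
rewrite /= negbK; case: (odd n) rel => /= rel.
- exists (castmx (pow2S n, pow2S n) (block_mx L 0 0 (- Rr^T))),
         (castmx (pow2S n, pow2S n) (block_mx L^T 0 0 (- Rr))).
  split; try exact/orthogonal_castmx/orthogonal_block_diag.
  rewrite !map_castmx !map_block_mx !map_mx0 !map_mxN -!map_trmx.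
  exact/suslin_tr_step/rel/orthogonal_map/oR/orthogonal_map/oL.
- exists (castmx (pow2S n, pow2S n) (block_mx 0 (- Rr^T) L 0)),
         (castmx (pow2S n, pow2S n) (block_mx 0 L^T (- Rr) 0)).
  split; try exact/orthogonal_castmx/orthogonal_block_antidiag.
  rewrite !map_castmx !map_block_mx !map_mx0 !map_mxN -!map_trmx.
  exact/suslin_swap_step/rel/orthogonal_map/oR/orthogonal_map/oL.
Qed.

Section Elementary.
Variable R : comNzRingType.

Lemma elem_mx_mul N (A B : 'M[R]_N) : elem_mx A -> elem_mx B -> elem_mx (A *m B).
Proof.
move=> eA; elim=> [|E i j r ij _ IH]; first by rewrite mulmx1.
by rewrite mulmxA; apply: elem_mxM.
Qed.

Lemma elem_transvection N (i j : 'I_N) (r : R) :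
  i != j -> elem_mx (1%:M + r *: delta_mx i j).
Proof.
by move=> ij; rewrite -[X in elem_mx X]mul1mx; apply: elem_mxM => //; apply: elem_mx1.
Qed.

Lemma elem_mx_tr N (E : 'M[R]_N) : elem_mx E -> elem_mx E^T.
Proof.
elim=> [|{}E i j r ij _ IH]; first by rewrite tr_scalar_mx; apply: elem_mx1.
rewrite trmx_mul linearD /= tr_scalar_mx linearZ /= trmx_delta.
by apply: elem_mx_mul IH; apply: elem_transvection; rewrite eq_sym.
Qed.

Lemma block_mx_delta_upper m1 m2 (i : 'I_m1) (j : 'I_m2) (r : R) :
  block_mx 1%:M (r *: delta_mx i j) 0 1%:M =
  1%:M + r *: delta_mx (lshift m2 i) (rshift m1 j).
Proof.
apply/matrixP=> u v; rewrite -[u]splitK -[v]splitK.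
case: (split u) => u'; case: (split v) => v' /=;
rewrite ?(block_mxEul, block_mxEur, block_mxEdl, block_mxEdr) !mxE /=;
by rewrite ?eq_lrshift ?eq_rlshift ?eq_lshift ?eq_rshift ?andbF ?mulr0 ?addr0 ?add0r.
Qed.

Lemma elem_block_upper m1 m2 (M : 'M[R]_(m1, m2)) : elem_mx (block_mx 1%:M M 0 1%:M).
Proof.
pose P (X : 'M[R]_(m1, m2)) := elem_mx (block_mx 1%:M X 0 1%:M).
have P0 : P 0 by rewrite /P -scalar_mx_block; apply: elem_mx1.
have PD X Y : P X -> P Y -> P (X + Y).
  rewrite /P => eX eY; have -> : block_mx 1%:M (X + Y) 0 1%:M =
    block_mx 1%:M X 0 1%:M *m block_mx 1%:M Y 0 1%:M :> 'M[R]_(m1 + m2).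
    by rewrite mulmx_block !(mulmx0, mul0mx, mulmx1, mul1mx, addr0, add0r) addrC.
  exact: elem_mx_mul.
rewrite [M]matrix_sum_delta; apply: (big_ind P) => // i _.
apply: (big_ind P) => // j _; rewrite /P block_mx_delta_upper.
apply: elem_transvection; apply/eqP => /(congr1 val) /= ij.
by move: (ltn_ord i); rewrite ij ltnNge leq_addr.
Qed.

Lemma elem_block_lower m1 m2 (M : 'M[R]_(m2, m1)) : elem_mx (block_mx 1%:M 0 M 1%:M).
Proof.
by have := elem_mx_tr (elem_block_upper M^T); rewrite tr_block_mx trmxK trmx0 !tr_scalar_mx.
Qed.

Lemma elem_block_antidiag m (U U' : 'M[R]_m) : U *m U' = 1%:M -> U' *m U = 1%:M ->
  elem_mx (block_mx 0 U (- U') 0).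
Proof.
move=> UU' U'U; have -> : block_mx 0 U (- U') 0 = block_mx 1%:M U 0 1%:M *m
    block_mx 1%:M 0 (- U') 1%:M *m block_mx 1%:M U 0 1%:M :> 'M[R]_(m + m).
  rewrite !mulmx_block !(mulmx0, mul0mx, mulmx1, mul1mx, addr0, add0r).
  by rewrite mulmxN UU' subrr mul0mx add0r mulNmx U'U addNr.
by apply: elem_mx_mul; [apply: elem_mx_mul|];
  [apply: elem_block_upper|apply: elem_block_lower|apply: elem_block_upper].
Qed.

Lemma elem_block_diag m (U U' : 'M[R]_m) : U *m U' = 1%:M -> U' *m U = 1%:M ->
  elem_mx (block_mx U 0 0 U').
Proof.
move=> UU' U'U; have -> : block_mx U 0 0 U' =
    block_mx 0 U (- U') 0 *m block_mx 0 (- 1%:M) (- - 1%:M) 0 :> 'M[R]_(m + m).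
  rewrite mulmx_block !(mulmx0, mul0mx, addr0, add0r) opprK mulmx1.
  by rewrite mulmxN mulNmx mulmx1 opprK.
apply: elem_mx_mul; first exact: elem_block_antidiag.
by apply: elem_block_antidiag; rewrite mulmxN mulNmx opprK mulmx1.
Qed.

Lemma elem_block_conj m (W W' X : 'M[R]_m) : W *m W' = 1%:M -> W' *m W = 1%:M ->
  elem_mx (block_mx X 0 0 (1%:M : 'M_m)) ->
  elem_mx (block_mx (W' *m X *m W) 0 0 (1%:M : 'M_m)).
Proof.
move=> WW' W'W eX; have -> : block_mx (W' *m X *m W) 0 0 1%:M =
    block_mx W' 0 0 W *m block_mx X 0 0 1%:M *m block_mx W 0 0 W' :> 'M[R]_(m + m).
  by rewrite !mulmx_block !(mulmx0, mul0mx, mulmx1, addr0, add0r) WW'.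
by apply: elem_mx_mul; [apply: elem_mx_mul|];
  [apply: elem_block_diag|apply: eX|apply: elem_block_diag].
Qed.

Lemma elem_block_commutator m (U U' V V' : 'M[R]_m) :
  U *m U' = 1%:M -> U' *m U = 1%:M -> V *m V' = 1%:M -> V' *m V = 1%:M ->
  elem_mx (block_mx (U *m V *m U' *m V') 0 0 (1%:M : 'M_m)).
Proof.
move=> UU' U'U VV' V'V.
have VU_inv : (U' *m V') *m (V *m U) = 1%:M.
  by rewrite mulmxA -(mulmxA U') V'V mulmx1 U'U.
have UV_inv : (V *m U) *m (U' *m V') = 1%:M.
  by rewrite mulmxA -(mulmxA V) UU' mulmx1 VV'.
have -> : block_mx (U *m V *m U' *m V') 0 0 1%:M =
    block_mx U 0 0 U' *m block_mx V 0 0 V' *m block_mx (U' *m V') 0 0 (V *m U)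
    :> 'M[R]_(m + m).
  rewrite !mulmx_block !(mulmx0, mul0mx, addr0, add0r) !mulmxA.
  by rewrite -(mulmxA U') V'V mulmx1 U'U.
by apply: elem_mx_mul; [apply: elem_mx_mul|]; apply: elem_block_diag.
Qed.

End Elementary.

Section ReducedK1.
Variables (k : fieldType) (R : comNzRingType) (f : {rmorphism k -> R}).

Lemma invertible_mx1 m : invertible_mx (1%:M : 'M[R]_m).
Proof. by exists 1%:M; rewrite mulmx1. Qed.

Lemma invertible_mx_tr m (A : 'M[R]_m) : invertible_mx A -> invertible_mx A^T.
Proof. by case=> B [AB BA]; exists B^T; rewrite -!trmx_mul AB BA tr_scalar_mx. Qed.

Lemma invertible_mxM m (A B : 'M[R]_m) :
  invertible_mx A -> invertible_mx B -> invertible_mx (A *m B).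
Proof.
case=> A' [AA' A'A] [B' [BB' B'B]]; exists (B' *m A'); split.
- by rewrite mulmxA -(mulmxA A) BB' mulmx1 AA'.
- by rewrite mulmxA -(mulmxA B') A'A mulmx1 B'B.
Qed.

Lemma rK1_eq_elem m p (A B E : 'M[R]_m) (K : 'M[k]_m) :
  invertible_mx A -> invertible_mx B -> elem_mx (block_mx E 0 0 (1%:M : 'M_p)) ->
  K \in unitmx -> A = B *m E *m map_mx f K -> rK1_eq f A B.
Proof.
move=> iA iB eE uK AE; split=> //; split=> //.
exists p, (block_mx E 0 0 1%:M), (block_mx K 0 0 1%:M); split=> //; split.
  by rewrite unitmxE det_ublock det1 mulr1 -unitmxE.
rewrite map_block_mx !map_mx0 map_mx1 !mulmx_block.
by rewrite !(mulmx0, mul0mx, mulmx1, addr0, add0r) AE.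
Qed.

End ReducedK1.

Section QuadricRing.
Variables (k : fieldType) (n : nat).

Lemma Rq_iota_is_zmod_morphism : zmod_morphism (@Rq_iota k n).
Proof. by move=> x y; rewrite /Rq_iota /Rq_pi mpolyCB rmorphB. Qed.

Lemma Rq_iota_is_monoid_morphism : monoid_morphism (@Rq_iota k n).
Proof.
rewrite /Rq_iota /Rq_pi; split; first by rewrite mpolyC1 rmorph1.
by move=> x y; rewrite mpolyCM rmorphM.
Qed.

HB.instance Definition _ := GRing.isZmodMorphism.Build k (Rq k n) (@Rq_iota k n)
  Rq_iota_is_zmod_morphism.
HB.instance Definition _ := GRing.isMonoidMorphism.Build k (Rq k n) (@Rq_iota k n)
  Rq_iota_is_monoid_morphism.

Lemma sum_xq_yq : \sum_(i < n.+1) xq k n i * yq k n i = 1.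
Proof.
have qrel_in : qrel k n.+1 - 0 \in qidealI k n.
  by apply/qidealP; exists 1; rewrite mul1r subr0.
move: qrel_in; rewrite Quotient.idealrBE /Rq_pi /qrel rmorphB rmorph1 rmorph0.
rewrite subr_eq0 rmorph_sum => /eqP <-; apply: eq_bigr => i _.
by rewrite rmorphM /xq /yq /Rq_pi inord_val.
Qed.

End QuadricRing.

Theorem lemma3p11 (k : fieldType) (n : nat) :
  let alpha := suslin n (@xq k n) (@yq k n) in
  if ~~ odd n then rK1_eq (@Rq_iota k n) alpha^T alpha
  else rK1_eq (@Rq_iota k n) (alpha^T *m alpha) 1%:M.
Proof.
move=> alpha; set alpha' := (suslin n (@yq k n) (@xq k n))^T.
have [alphaK alpha'K] : alpha *m alpha' = 1%:M /\ alpha' *m alpha = 1%:M.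
  by rewrite -(sum_xq_yq k n); apply: suslin_mulmx_tr.
have ialpha : invertible_mx alpha by exists alpha'.
have [L [Rr [oL oR /(_ (@xq k n) (@yq k n)) rel_xy]]] :=
  suslin_orthogonal_equiv (@Rq_iota k n) n.
have [LfLfT LfTLf] := orthogonal_map (@Rq_iota k n) oL.
have [RfRfT RfTRf] := orthogonal_map (@Rq_iota k n) oR.
set Lf := map_mx _ L in rel_xy LfLfT LfTLf *.
set Rf := map_mx _ Rr in rel_xy RfRfT RfTRf *.
have comm := elem_block_commutator alpha'K alphaK LfLfT LfTLf.
case: ifP rel_xy => _ rel_xy.
- apply: (rK1_eq_elem (K := L *m Rr) (invertible_mx_tr ialpha) ialpha comm).
    by rewrite unitmx_mul !orthogonal_unitmx.
  rewrite rel_xy map_mxM -/Lf -/Rf !mulmxA alphaK mul1mx.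
  by rewrite -(mulmxA _ Lf^T) LfTLf mulmx1.
- have alpha_tr : alpha^T = Rf *m alpha' *m Lf.
    by rewrite /alpha' rel_xy !trmx_mul !mulmxA RfRfT mul1mx -mulmxA LfTLf mulmx1.
  have ialpha_tr := invertible_mx_tr ialpha.
  apply: (rK1_eq_elem (K := Rr *m L) (invertible_mxM ialpha_tr ialpha)
           (invertible_mx1 _ _) (elem_block_conj RfTRf RfRfT comm)).
    by rewrite unitmx_mul !orthogonal_unitmx.
  rewrite alpha_tr map_mxM -/Lf -/Rf mul1mx !mulmxA -(mulmxA _ Rf^T) RfTRf mulmx1.
  by rewrite -(mulmxA _ Lf^T) LfTLf mulmx1.
Qed.
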